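(* Let $\lambda_0,\omega\in\mathbb{C}$ with $\omega\neq0$, let $\lambda_j=\lambda_0+j\omega$ for $j=0,\dots,n$, and let $a\ne b$ be real with $e^{\omega(b-a)}\neq1$. For $k=0,\dots,n$ define $$p_{n,k}(x):=\frac{e^{\lambda_0(x-a)}}{k!\,\omega^k}\big(e^{\omega(x-a)}-1\big)^k\left(\frac{1-e^{\omega(x-b)}}{1-e^{\omega(a-b)}}\right)^{n-k}.$$ Then each $p_{n,k}$ belongs to $E_{(\lambda_0,\dots,\lambda_n)}$, has a zero of order exactly $k$ at $a$ and a zero of order exactly $n-k$ at $b$, and satisfies $k!\lim_{x\to a}p_{n,k}(x)/(x-a)^k=1$; i.e. $p_{n,k}$, $k=0,\dots,n$, is the Bernstein basis of $E_{(\lambda_0,\dots,\lambda_n)}$ with respect to $a,b$.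
   Context: $E_{(\lambda_0,\dots,\lambda_n)}$ denotes the space of all $f\in C^\infty(\mathbb{R},\mathbb{C})$ with $(\frac{d}{dx}-\lambda_0)\cdots(\frac{d}{dx}-\lambda_n)f=0$. A zero of order (exactly) $k$ at $a$ means $f(a)=\dots=f^{(k-1)}(a)=0$, $f^{(k)}(a)\neq0$. The Bernstein basis with respect to $a\ne b$ is the unique family $p_{n,k}\in E_{(\lambda_0,\dots,\lambda_n)}$, $k=0,\dots,n$, with a zero of order exactly $k$ at $a$, exactly $n-k$ at $b$, and $p_{n,k}^{(k)}(a)=1$. *)

From Stdlib Require Import Reals Lra List Arith Factorial.
Open Scope R_scope.

Record Cplx : Type := mkC { Re : R; Im : R }.

Definition RtoC (r : R) : Cplx := mkC r 0.
Definition Czero : Cplx := RtoC 0.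
Definition Cone : Cplx := RtoC 1.
Definition Cadd (z w : Cplx) : Cplx := mkC (Re z + Re w) (Im z + Im w).
Definition Copp (z : Cplx) : Cplx := mkC (- Re z) (- Im z).
Definition Csub (z w : Cplx) : Cplx := Cadd z (Copp w).
Definition Cmul (z w : Cplx) : Cplx :=
  mkC (Re z * Re w - Im z * Im w) (Re z * Im w + Im z * Re w).
Definition Cinv (z : Cplx) : Cplx :=
  let d := Re z * Re z + Im z * Im z in mkC (Re z / d) (- Im z / d).
Definition Cdiv (z w : Cplx) : Cplx := Cmul z (Cinv w).
Fixpoint Cpow (z : Cplx) (n : nat) : Cplx :=
  match n with O => Cone | S m => Cmul z (Cpow z m) end.
Definition Cexp (z : Cplx) : Cplx :=
  mkC (exp (Re z) * cos (Im z)) (exp (Re z) * sin (Im z)).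

Definition has_deriv (f f' : R -> Cplx) : Prop :=
  forall x : R,
    derivable_pt_lim (fun t => Re (f t)) x (Re (f' x)) /\
    derivable_pt_lim (fun t => Im (f t)) x (Im (f' x)).

Inductive Dn : nat -> (R -> Cplx) -> (R -> Cplx) -> Prop :=
| Dn_O : forall f, Dn O f f
| Dn_S : forall n f f' g, has_deriv f f' -> Dn n f' g -> Dn (S n) f g.

Definition smooth (f : R -> Cplx) : Prop := forall n, exists g, Dn n f g.

(** [applyL [l_0; ...; l_n] f g] : g = (d/dx - l_0) ... (d/dx - l_n) f
    (constant-coefficient operators commute, so the order is immaterial). *)
Inductive applyL : list Cplx -> (R -> Cplx) -> (R -> Cplx) -> Prop :=
| applyL_nil : forall f, applyL nil f f
| applyL_cons : forall l ls f f' g,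
    has_deriv f f' ->
    applyL ls (fun x => Csub (f' x) (Cmul l (f x))) g ->
    applyL (l :: ls) f g.

Definition in_E (ls : list Cplx) (f : R -> Cplx) : Prop :=
  smooth f /\ applyL ls f (fun _ => Czero).

Definition deriv_at (n : nat) (f : R -> Cplx) (a : R) (v : Cplx) : Prop :=
  exists g, Dn n f g /\ g a = v.

Definition zero_of_order (k : nat) (f : R -> Cplx) (a : R) : Prop :=
  (forall j, (j < k)%nat -> deriv_at j f a Czero) /\
  exists v, deriv_at k f a v /\ v <> Czero.

Definition lams (l0 om : Cplx) (n : nat) : list Cplx :=
  map (fun j => Cadd l0 (Cmul (RtoC (INR j)) om)) (seq 0 (S n)).

Definition pnk (l0 om : Cplx) (a b : R) (n k : nat) (x : R) : Cplx :=
  Cmul (Cmul (Cdiv (Cexp (Cmul l0 (RtoC (x - a))))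
                   (Cmul (RtoC (INR (fact k))) (Cpow om k)))
             (Cpow (Csub (Cexp (Cmul om (RtoC (x - a)))) Cone) k))
       (Cpow (Cdiv (Csub Cone (Cexp (Cmul om (RtoC (x - b)))))
                   (Csub Cone (Cexp (Cmul om (RtoC (a - b))))))
             (n - k)).

(** Every function in sight is an exponential sum
    [x |-> sum_i c_i exp (mu_i x)], represented by the list of pairs
    [(c_i, mu_i)].  Such sums are closed under sums and products, their
    derivative is again an exponential sum with the same frequencies, and
    [(d/dx - l)] multiplies the coefficient of frequency [mu] by [mu - l];
    hence a sum whose frequencies all lie in [ls] is smooth and annihilated by
    the operator of [ls].  Writing [p_{n,k}] as a product of factors with
    frequencies in arithmetic progressions shows that its frequencies are
    [l0 + j om], [j <= n], so [p_{n,k}] lies in [E].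
    For the zeros we use one Leibniz-type fact: if [u(a) = 0] then [u^k g]
    has vanishing derivatives of order [< k] at [a] and
    [(u^k g)^(k)(a) = k! u'(a)^k g(a)].  Factoring [p_{n,k}] as
    [(e^{om(x-a)} - 1)^k * g_a] and as [q_b^(n-k) * g_b] (with [q_b(b) = 0])
    gives the orders of the zeros at [a] and [b] and the normalisation
    [p_{n,k}^(k)(a) = 1]; the limit [k! p_{n,k}(x)/(x-a)^k -> 1] follows from
    [u(x)/(x-a) -> u'(a)] and continuity. *)
From Stdlib Require Import Reals List Arith Factorial Lra Lia Field Ring.
From Stdlib Require Import FunctionalExtensionality.
Open Scope R_scope.

Lemma Ceq (z w : Cplx) : Re z = Re w -> Im z = Im w -> z = w.
Proof. destruct z, w; simpl; intros -> ->; reflexivity. Qed.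

Lemma Cring : ring_theory Czero Cone Cadd Cmul Csub Copp (@eq Cplx).
Proof.
  constructor; intros; apply Ceq;
  unfold Czero, Cone, RtoC, Cadd, Csub, Copp, Cmul; simpl; ring.
Qed.

Lemma Cfield : field_theory Czero Cone Cadd Cmul Csub Copp Cdiv Cinv (@eq Cplx).
Proof.
  constructor.
  - exact Cring.
  - intro H; injection H; lra.
  - reflexivity.
  - intros [x y] Hz.
    assert (Hd : x * x + y * y <> 0).
    { intro E; apply Hz.
      assert (x = 0) by nra; assert (y = 0) by nra; subst; reflexivity. }
    apply Ceq; unfold Cinv, Cmul, Cone, RtoC; simpl; field; exact Hd.
Qed.
Add Field Cfield : Cfield.

Lemma RtoC_add x y : RtoC (x + y) = Cadd (RtoC x) (RtoC y).
Proof. apply Ceq; simpl; ring. Qed.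
Lemma RtoC_mul x y : RtoC (x * y) = Cmul (RtoC x) (RtoC y).
Proof. apply Ceq; simpl; ring. Qed.
Lemma RtoC_sub x y : RtoC (x - y) = Csub (RtoC x) (RtoC y).
Proof. apply Ceq; simpl; ring. Qed.
Lemma RtoC_neq0 r : r <> 0 -> RtoC r <> Czero.
Proof. intros H E; injection E; exact H. Qed.

Lemma Cmul_neq0 z w : z <> Czero -> w <> Czero -> Cmul z w <> Czero.
Proof.
  intros Hz Hw E; apply Hw.
  replace w with (Cmul (Cinv z) (Cmul z w)) by (field; exact Hz).
  rewrite E; ring.
Qed.
Lemma Cpow_neq0 z m : z <> Czero -> Cpow z m <> Czero.
Proof.
  intro Hz; induction m as [|m IH]; simpl.
  - intro E; injection E; lra.
  - apply Cmul_neq0; assumption.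
Qed.
Lemma Cinv_neq0 z : z <> Czero -> Cinv z <> Czero.
Proof.
  intros Hz E.
  assert (H1 : Cmul (Cinv z) z = Cone) by (field; exact Hz).
  rewrite E in H1; replace (Cmul Czero z) with Czero in H1 by ring.
  injection H1; lra.
Qed.

Lemma Cpow_one m : Cpow Cone m = Cone.
Proof. induction m as [|m IH]; simpl; [reflexivity | rewrite IH; ring]. Qed.
Lemma Cpow_mul_RtoC z s k : Cpow (Cmul z (RtoC s)) k = Cmul (Cpow z k) (RtoC (s ^ k)).
Proof.
  induction k as [|k IH]; simpl.
  - apply Ceq; simpl; ring.
  - rewrite IH, RtoC_mul; ring.
Qed.

Lemma Cexp_add z w : Cexp (Cadd z w) = Cmul (Cexp z) (Cexp w).
Proof.
  destruct z as [x y], w as [u v]; apply Ceq; unfold Cexp, Cadd, Cmul; simpl;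
  rewrite exp_plus; [rewrite cos_plus | rewrite sin_plus]; ring.
Qed.
Lemma Cexp_zero : Cexp Czero = Cone.
Proof.
  apply Ceq; unfold Cexp, Czero, Cone, RtoC; simpl; rewrite exp_0;
  [rewrite cos_0 | rewrite sin_0]; ring.
Qed.
Lemma Cexp_neq0 z : Cexp z <> Czero.
Proof.
  destruct z as [x y]; unfold Cexp, Czero, RtoC; simpl; intro E.
  injection E; intros Esin Ecos.
  pose proof (exp_pos x) as Hx; pose proof (sin2_cos2 y) as Hy; unfold Rsqr in Hy.
  assert (cos y = 0) by (apply (Rmult_eq_reg_l (exp x)); lra).
  assert (sin y = 0) by (apply (Rmult_eq_reg_l (exp x)); lra).
  nra.
Qed.
Lemma Cexp_shift_self mu s : Cexp (Cmul mu (RtoC (s - s))) = Cone.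
Proof.
  replace (Cmul mu (RtoC (s - s))) with Czero
    by (rewrite RtoC_sub; ring).
  apply Cexp_zero.
Qed.

Lemma has_deriv_ext f g f' g' : (forall x, f x = g x) -> (forall x, f' x = g' x) ->
  has_deriv f f' -> has_deriv g g'.
Proof.
  intros Hf Hf' H.
  replace g with f by (apply functional_extensionality; exact Hf).
  replace g' with f' by (apply functional_extensionality; exact Hf').
  exact H.
Qed.

Lemma has_deriv_const c : has_deriv (fun _ => c) (fun _ => Czero).
Proof. intro x; split; apply derivable_pt_lim_const. Qed.

Lemma has_deriv_add f g f' g' : has_deriv f f' -> has_deriv g g' ->
  has_deriv (fun x => Cadd (f x) (g x)) (fun x => Cadd (f' x) (g' x)).
Proof.
  intros Hf Hg x; destruct (Hf x), (Hg x); split; simpl;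
  apply derivable_pt_lim_plus; assumption.
Qed.

Lemma derivable_pt_lim_eq f x l l' : derivable_pt_lim f x l -> l = l' ->
  derivable_pt_lim f x l'.
Proof. intros H <-; exact H. Qed.

Lemma has_deriv_mul f g f' g' : has_deriv f f' -> has_deriv g g' ->
  has_deriv (fun x => Cmul (f x) (g x))
            (fun x => Cadd (Cmul (f' x) (g x)) (Cmul (f x) (g' x))).
Proof.
  intros Hf Hg x; destruct (Hf x) as [Hf1 Hf2], (Hg x) as [Hg1 Hg2]; split; simpl.
  - eapply derivable_pt_lim_eq.
    + apply (derivable_pt_lim_minus (fun t => Re (f t) * Re (g t))
                                    (fun t => Im (f t) * Im (g t)));
      apply derivable_pt_lim_mult; eassumption.
    + cbv beta; ring.
  - eapply derivable_pt_lim_eq.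
    + apply (derivable_pt_lim_plus (fun t => Re (f t) * Im (g t))
                                   (fun t => Im (f t) * Re (g t)));
      apply derivable_pt_lim_mult; eassumption.
    + cbv beta; ring.
Qed.

Lemma has_deriv_scal c f f' : has_deriv f f' ->
  has_deriv (fun x => Cmul c (f x)) (fun x => Cmul c (f' x)).
Proof.
  intro H; eapply has_deriv_ext;
    [| | exact (has_deriv_mul _ _ _ _ (has_deriv_const c) H)];
  intro x; simpl; [reflexivity | ring].
Qed.

Lemma derivable_pt_lim_scaled F F' p x :
  derivable_pt_lim F (p * x) F' ->
  derivable_pt_lim (fun t => F (p * t)) x (p * F').
Proof.
  intro HF.
  assert (Hlin : derivable_pt_lim (fun t => p * t) x p).
  { eapply derivable_pt_lim_eq;
      [apply (derivable_pt_lim_scal id p x 1), derivable_pt_lim_id | ring]. }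
  eapply derivable_pt_lim_eq;
    [exact (derivable_pt_lim_comp (fun t => p * t) F x p F' Hlin HF) | ring].
Qed.

Lemma has_deriv_Cexp m : has_deriv (fun x => Cexp (Cmul m (RtoC x)))
  (fun x => Cmul m (Cexp (Cmul m (RtoC x)))).
Proof.
  destruct m as [p q]; intro x; unfold Cexp, Cmul, RtoC; simpl.
  assert (Hre : forall t, p * t - q * 0 = p * t) by (intro; ring).
  assert (Him : forall t, p * 0 + q * t = q * t) by (intro; ring).
  replace (fun t => exp (p * t - q * 0) * cos (p * 0 + q * t))
    with (fun t => exp (p * t) * cos (q * t))
    by (extensionality t; rewrite Hre, Him; reflexivity).
  replace (fun t => exp (p * t - q * 0) * sin (p * 0 + q * t))
    with (fun t => exp (p * t) * sin (q * t))
    by (extensionality t; rewrite Hre, Him; reflexivity).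
  rewrite Hre, Him; split; eapply derivable_pt_lim_eq.
  - apply derivable_pt_lim_mult; apply derivable_pt_lim_scaled;
      [apply derivable_pt_lim_exp | apply derivable_pt_lim_cos].
  - cbv beta; ring.
  - apply derivable_pt_lim_mult; apply derivable_pt_lim_scaled;
      [apply derivable_pt_lim_exp | apply derivable_pt_lim_sin].
  - cbv beta; ring.
Qed.

Lemma has_deriv_pow u u' : has_deriv u u' -> forall m,
  has_deriv (fun x => Cpow (u x) (S m))
            (fun x => Cmul (Cmul (RtoC (INR (S m))) (Cpow (u x) m)) (u' x)).
Proof.
  intros Hu m; induction m as [|m IH].
  - eapply has_deriv_ext; [| | exact (has_deriv_mul _ _ _ _ Hu (has_deriv_const Cone))];
    intro x; simpl; [reflexivity | apply Ceq; simpl; ring].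
  - eapply has_deriv_ext; [| | exact (has_deriv_mul _ _ _ _ Hu IH)]; intro x; cbn [Cpow].
    + reflexivity.
    + rewrite !S_INR, !RtoC_add; change (RtoC 1) with Cone; ring.
Qed.

Lemma has_deriv_shifted_Cexp mu s : has_deriv (fun x => Cexp (Cmul mu (RtoC (x - s))))
  (fun x => Cmul mu (Cexp (Cmul mu (RtoC (x - s))))).
Proof.
  assert (Hsplit : forall x, Cexp (Cmul mu (RtoC (x - s)))
                   = Cmul (Cexp (Copp (Cmul mu (RtoC s)))) (Cexp (Cmul mu (RtoC x)))).
  { intro x; rewrite <- Cexp_add; f_equal; rewrite RtoC_sub; ring. }
  eapply has_deriv_ext;
    [| | exact (has_deriv_scal (Cexp (Copp (Cmul mu (RtoC s)))) _ _ (has_deriv_Cexp mu))];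
  intro x; rewrite Hsplit; [reflexivity | ring].
Qed.

(** ** Exponential sums *)

Fixpoint es (L : list (Cplx * Cplx)) (x : R) : Cplx :=
  match L with
  | nil => Czero
  | (c, mu) :: L' => Cadd (Cmul c (Cexp (Cmul mu (RtoC x)))) (es L' x)
  end.

Definition es_deriv (L : list (Cplx * Cplx)) : list (Cplx * Cplx) :=
  map (fun t => (Cmul (fst t) (snd t), snd t)) L.

Lemma has_deriv_es L : has_deriv (es L) (es (es_deriv L)).
Proof.
  induction L as [|[c mu] L IH].
  - exact (has_deriv_const Czero).
  - eapply has_deriv_ext;
      [| | exact (has_deriv_add _ _ _ _ (has_deriv_scal c _ _ (has_deriv_Cexp mu)) IH)];
    intro x; simpl; [reflexivity | ring].
Qed.

Lemma es_app L1 L2 x : es (L1 ++ L2) x = Cadd (es L1 x) (es L2 x).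
Proof. induction L1 as [|[c mu] L IH]; simpl; [ring | rewrite IH; ring]. Qed.

Lemma es_scal c L x : es (map (fun t => (Cmul c (fst t), snd t)) L) x = Cmul c (es L x).
Proof. induction L as [|[c' mu] L IH]; simpl; [ring | rewrite IH; ring]. Qed.

Definition es_prod_list (L1 L2 : list (Cplx * Cplx)) : list (Cplx * Cplx) :=
  flat_map (fun t => map (fun s => (Cmul (fst t) (fst s), Cadd (snd t) (snd s))) L2) L1.

Lemma es_prod L1 L2 x : es (es_prod_list L1 L2) x = Cmul (es L1 x) (es L2 x).
Proof.
  assert (Hshift : forall c mu L, es (map (fun s => (Cmul c (fst s), Cadd mu (snd s))) L) x
                                  = Cmul (Cmul c (Cexp (Cmul mu (RtoC x)))) (es L x)).
  { intros c mu L; induction L as [|[c2 mu2] L IH]; simpl; [ring |].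
    rewrite IH.
    replace (Cmul (Cadd mu mu2) (RtoC x))
      with (Cadd (Cmul mu (RtoC x)) (Cmul mu2 (RtoC x))) by ring.
    rewrite Cexp_add; ring. }
  induction L1 as [|[c mu] L IH]; simpl; [ring |].
  rewrite es_app, IH, Hshift; ring.
Qed.

Lemma es_const c x : es ((c, Czero) :: nil) x = c.
Proof.
  simpl; replace (Cmul Czero (RtoC x)) with Czero by ring.
  rewrite Cexp_zero; ring.
Qed.

Lemma es_shifted_exp mu s x :
  Cexp (Cmul mu (RtoC (x - s))) = es ((Cexp (Copp (Cmul mu (RtoC s))), mu) :: nil) x.
Proof.
  simpl; rewrite <- Cexp_add.
  replace (Cadd (Copp (Cmul mu (RtoC s))) (Cmul mu (RtoC x)))
    with (Cmul mu (RtoC (x - s))) by (rewrite RtoC_sub; ring).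
  ring.
Qed.

Definition exp_sum (P : Cplx -> Prop) (f : R -> Cplx) : Prop :=
  exists L, f = es L /\ Forall (fun t => P (snd t)) L.

Notation any_exp_sum := (exp_sum (fun _ => True)).

Section ExpSumClosure.
Variable P : Cplx -> Prop.

Lemma exp_sum_intro f L : (forall x, f x = es L x) ->
  Forall (fun t => P (snd t)) L -> exp_sum P f.
Proof. intros Hf HL; exists L; split; [extensionality x; apply Hf | exact HL]. Qed.

Lemma exp_sum_ext f g : (forall x, f x = g x) -> exp_sum P f -> exp_sum P g.
Proof. intros Hfg Hf; replace g with f by (extensionality x; apply Hfg); exact Hf. Qed.

Lemma exp_sum_const c : P Czero -> exp_sum P (fun _ => c).
Proof.
  intro H0; apply (exp_sum_intro _ ((c, Czero) :: nil));
  [intro x; rewrite es_const; reflexivity | repeat constructor; exact H0].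
Qed.

Lemma exp_sum_exp mu s : P mu -> exp_sum P (fun x => Cexp (Cmul mu (RtoC (x - s)))).
Proof.
  intro Hmu; eapply exp_sum_intro;
  [intro x; apply es_shifted_exp | repeat constructor; exact Hmu].
Qed.

Lemma exp_sum_add f g : exp_sum P f -> exp_sum P g -> exp_sum P (fun x => Cadd (f x) (g x)).
Proof.
  intros [L1 [-> H1]] [L2 [-> H2]]; apply (exp_sum_intro _ (L1 ++ L2));
  [intro x; rewrite es_app; reflexivity | apply Forall_app; split; assumption].
Qed.

Lemma exp_sum_scal c f : exp_sum P f -> exp_sum P (fun x => Cmul c (f x)).
Proof.
  intros [L [-> HL]]; apply (exp_sum_intro _ (map (fun t => (Cmul c (fst t), snd t)) L)).
  - intro x; rewrite es_scal; reflexivity.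
  - apply Forall_map; exact HL.
Qed.

Lemma exp_sum_scal_r c f : exp_sum P f -> exp_sum P (fun x => Cmul (f x) c).
Proof.
  intro H; apply (exp_sum_ext (fun x => Cmul c (f x))); [intro; ring | apply exp_sum_scal, H].
Qed.

Lemma exp_sum_sub f g : exp_sum P f -> exp_sum P g -> exp_sum P (fun x => Csub (f x) (g x)).
Proof.
  intros Hf Hg; apply (exp_sum_ext (fun x => Cadd (f x) (Cmul (Copp Cone) (g x)))).
  - intro x; unfold Csub; f_equal; ring.
  - apply exp_sum_add, exp_sum_scal; assumption.
Qed.

Lemma exp_sum_deriv f : exp_sum P f -> exists f', exp_sum P f' /\ has_deriv f f'.
Proof.
  intros [L [-> HL]]; exists (es (es_deriv L)); split.
  - exists (es_deriv L); split; [reflexivity | apply Forall_map; exact HL].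
  - apply has_deriv_es.
Qed.

End ExpSumClosure.

Lemma exp_sum_weaken (P Q : Cplx -> Prop) f :
  (forall mu, P mu -> Q mu) -> exp_sum P f -> exp_sum Q f.
Proof.
  intros HPQ [L [-> HL]]; exists L; split; [reflexivity |].
  eapply Forall_impl; [| exact HL]; intros t; apply HPQ.
Qed.

Lemma exp_sum_any P f : exp_sum P f -> any_exp_sum f.
Proof. apply exp_sum_weaken; tauto. Qed.

Lemma exp_sum_mul (P Q S : Cplx -> Prop) f g :
  (forall mu nu, P mu -> Q nu -> S (Cadd mu nu)) ->
  exp_sum P f -> exp_sum Q g -> exp_sum S (fun x => Cmul (f x) (g x)).
Proof.
  intros HPQ [L1 [-> H1]] [L2 [-> H2]]; apply (exp_sum_intro _ _ (es_prod_list L1 L2)).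
  - intro x; rewrite es_prod; reflexivity.
  - apply Forall_flat_map, Forall_forall; intros t1 Ht1.
    apply Forall_map, Forall_forall; intros t2 Ht2; simpl.
    rewrite Forall_forall in H1, H2; apply HPQ; [apply H1 | apply H2]; assumption.
Qed.

Lemma any_exp_sum_mul f g :
  any_exp_sum f -> any_exp_sum g -> any_exp_sum (fun x => Cmul (f x) (g x)).
Proof. apply exp_sum_mul; tauto. Qed.

Lemma any_exp_sum_pow f m : any_exp_sum f -> any_exp_sum (fun x => Cpow (f x) m).
Proof.
  intro Hf; induction m as [|m IH]; simpl.
  - apply exp_sum_const; exact I.
  - apply any_exp_sum_mul; assumption.
Qed.

(** ** Exponential sums are annihilated by the operator of their frequencies *)

(** [char_value ls mu = prod_{l in ls} (mu - l)]: the symbol of [prod (d/dx - l)] at [mu]. *)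
Definition char_value (ls : list Cplx) (mu : Cplx) : Cplx :=
  fold_right (fun l acc => Cmul (Csub mu l) acc) Cone ls.

Lemma char_value_root ls mu : In mu ls -> char_value ls mu = Czero.
Proof.
  induction ls as [|l ls IH]; simpl; intros H; [contradiction |].
  destruct H as [<- | H]; [ring | rewrite IH by exact H; ring].
Qed.

Lemma applyL_es ls : forall L,
  applyL ls (es L) (es (map (fun t => (Cmul (fst t) (char_value ls (snd t)), snd t)) L)).
Proof.
  induction ls as [|l ls IH]; intro L.
  - replace (map _ L) with L; [constructor |].
    induction L as [|[c mu] L IHL]; [reflexivity |].
    simpl; f_equal; [f_equal; ring | exact IHL].
  - econstructor; [apply has_deriv_es |].
    set (L1 := map (fun t => (Cmul (fst t) (Csub (snd t) l), snd t)) L).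
    replace (fun x => Csub (es (es_deriv L) x) (Cmul l (es L x))) with (es L1).
    + replace (map _ L) with (map (fun t => (Cmul (fst t) (char_value ls (snd t)), snd t)) L1);
        [apply IH |].
      unfold L1; rewrite map_map; apply map_ext; intros [c mu]; simpl; f_equal; ring.
    + extensionality x; unfold L1, es_deriv.
      induction L as [|[c mu] L IHL]; simpl; [ring | rewrite IHL; ring].
Qed.

Lemma Dn_es n : forall L, Dn n (es L) (es (Nat.iter n es_deriv L)).
Proof.
  induction n as [|n IH]; intro L; [constructor |].
  econstructor; [apply has_deriv_es | rewrite Nat.iter_succ_r; apply IH].
Qed.

Lemma in_E_of_exp_sum ls f : exp_sum (fun mu => In mu ls) f -> in_E ls f.
Proof.
  intros [L [-> HL]]; split.
  - intro n; eexists; apply Dn_es.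
  - replace (fun _ : R => Czero)
      with (es (map (fun t => (Cmul (fst t) (char_value ls (snd t)), snd t)) L));
      [apply applyL_es |].
    extensionality x; induction L as [|[c mu] L IHL]; [reflexivity |].
    inversion HL as [|? ? Hmu HL']; subst; simpl in *.
    rewrite IHL, char_value_root by assumption; ring.
Qed.

Definition arith_prog (om l : Cplx) (m : nat) (mu : Cplx) : Prop :=
  exists j, (j <= m)%nat /\ mu = Cadd l (Cmul (RtoC (INR j)) om).

Lemma arith_prog_add om l1 l2 l3 m1 m2 m3 mu nu :
  Cadd l1 l2 = l3 -> (m1 + m2 <= m3)%nat ->
  arith_prog om l1 m1 mu -> arith_prog om l2 m2 nu -> arith_prog om l3 m3 (Cadd mu nu).
Proof.
  intros <- Hm [j1 [Hj1 ->]] [j2 [Hj2 ->]]; exists (j1 + j2)%nat; split; [lia |].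
  rewrite plus_INR, RtoC_add; ring.
Qed.

Lemma arith_prog_start om l m : arith_prog om l m l.
Proof. exists 0%nat; split; [lia | apply Ceq; simpl; ring]. Qed.

Lemma arith_prog_step om : arith_prog om Czero 1 om.
Proof. exists 1%nat; split; [lia | apply Ceq; simpl; ring]. Qed.

Lemma arith_prog_lams l0 om n mu : arith_prog om l0 n mu -> In mu (lams l0 om n).
Proof.
  intros [j [Hj ->]]; apply in_map_iff; exists j; split; [reflexivity |].
  apply in_seq; lia.
Qed.

Lemma exp_sum_pow_prog om f m :
  exp_sum (arith_prog om Czero 1) f -> exp_sum (arith_prog om Czero m) (fun x => Cpow (f x) m).
Proof.
  intro Hf; induction m as [|m IH]; simpl.
  - apply exp_sum_const, arith_prog_start.
  - refine (exp_sum_mul _ _ _ _ _ _ Hf IH); intros mu nu;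
    apply arith_prog_add; [ring | lia].
Qed.

(** ** Derivatives of [u^k g] at a zero of [u] *)

Section PowerFactor.
Variables (u u' : R -> Cplx) (a : R).
Hypotheses (Hu : any_exp_sum u) (Hu' : any_exp_sum u') (Hderiv : has_deriv u u')
           (Hzero : u a = Czero).

(** If [u(a) = 0], then [(u^k g)^(j)(a) = 0] for [j < k] and
    [(u^k g)^(k)(a) = k! u'(a)^k g(a)]; induction on [k], using
    [(u^(k+1) g)' = u^k ((k+1) u' g + u g')]. *)
Lemma power_factor_derivatives k : forall g, any_exp_sum g ->
  (forall j, (j < k)%nat -> deriv_at j (fun x => Cmul (Cpow (u x) k) (g x)) a Czero) /\
  deriv_at k (fun x => Cmul (Cpow (u x) k) (g x)) a
    (Cmul (Cmul (RtoC (INR (fact k))) (Cpow (u' a) k)) (g a)).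
Proof.
  induction k as [|k IH]; intros g Hg.
  - split; [intros j Hj; lia |].
    eexists; split; [constructor | simpl; apply Ceq; simpl; ring].
  - destruct (exp_sum_deriv _ g Hg) as [g' [Hg' Hgg']].
    set (g1 := fun x => Cadd (Cmul (Cmul (RtoC (INR (S k))) (u' x)) (g x)) (Cmul (u x) (g' x))).
    assert (Hg1 : any_exp_sum g1).
    { apply exp_sum_add; apply any_exp_sum_mul; try assumption.
      apply exp_sum_scal; assumption. }
    assert (Hd : has_deriv (fun x => Cmul (Cpow (u x) (S k)) (g x))
                           (fun x => Cmul (Cpow (u x) k) (g1 x))).
    { eapply has_deriv_ext;
        [| | exact (has_deriv_mul _ _ _ _ (has_deriv_pow _ _ Hderiv k) Hgg')];
      intro x; [reflexivity | unfold g1; cbn [Cpow]; ring]. }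
    destruct (IH g1 Hg1) as [Hlow [G [HG HGa]]]; split.
    + intros [|j] Hj.
      * eexists; split; [constructor | cbn [Cpow]; rewrite Hzero; ring].
      * destruct (Hlow j ltac:(lia)) as [Gj [HGj HGja]].
        exists Gj; split; [econstructor; eassumption | exact HGja].
    + exists G; split; [econstructor; eassumption |].
      rewrite HGa; unfold g1; rewrite Hzero.
      change (fact (S k)) with (S k * fact k)%nat.
      rewrite mult_INR, RtoC_mul; cbn [Cpow]; ring.
Qed.

Lemma power_factor_zero_order k g : any_exp_sum g ->
  u' a <> Czero -> g a <> Czero ->
  zero_of_order k (fun x => Cmul (Cpow (u x) k) (g x)) a.
Proof.
  intros Hg Hu'a Hga; destruct (power_factor_derivatives k g Hg) as [Hlow Htop].
  split; [exact Hlow |]; eexists; split; [exact Htop |].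
  repeat apply Cmul_neq0; try assumption.
  - apply RtoC_neq0, INR_fact_neq_0.
  - apply Cpow_neq0; assumption.
Qed.

End PowerFactor.

(** ** Limits of complex-valued functions at a point *)

Definition Clim (f : R -> Cplx) (l : Cplx) (a : R) : Prop :=
  limit1_in (fun x => Re (f x)) (fun x => x <> a) (Re l) a /\
  limit1_in (fun x => Im (f x)) (fun x => x <> a) (Im l) a.

Lemma limit1_in_ext (f g : R -> R) l a : (forall x, x <> a -> f x = g x) ->
  limit1_in f (fun x => x <> a) l a -> limit1_in g (fun x => x <> a) l a.
Proof.
  intros Hfg Hf eps Heps; destruct (Hf eps Heps) as [alp [Halp Hclose]].
  exists alp; split; [exact Halp |]; intros x [Hx Hdist].
  rewrite <- Hfg by exact Hx; apply Hclose; split; assumption.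
Qed.

Lemma Clim_ext f g l a : (forall x, x <> a -> f x = g x) -> Clim f l a -> Clim g l a.
Proof.
  intros Hfg [H1 H2]; split; (eapply limit1_in_ext; [| eassumption]);
  intros x Hx; cbv beta; rewrite Hfg by exact Hx; reflexivity.
Qed.

Lemma Clim_const c a : Clim (fun _ => c) c a.
Proof. split; apply (limit_free (fun _ => _) _ 0 a). Qed.

Lemma Clim_mul f g lf lg a : Clim f lf a -> Clim g lg a ->
  Clim (fun x => Cmul (f x) (g x)) (Cmul lf lg) a.
Proof.
  intros [Hf1 Hf2] [Hg1 Hg2]; split; simpl.
  - apply (limit_minus (fun x => Re (f x) * Re (g x)) (fun x => Im (f x) * Im (g x)));
    apply limit_mul; assumption.
  - apply (limit_plus (fun x => Re (f x) * Im (g x)) (fun x => Im (f x) * Re (g x)));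
    apply limit_mul; assumption.
Qed.

Lemma Clim_pow f l a m : Clim f l a -> Clim (fun x => Cpow (f x) m) (Cpow l m) a.
Proof.
  intro H; induction m as [|m IH]; simpl; [apply Clim_const | apply Clim_mul; assumption].
Qed.

Lemma Clim_of_has_deriv g g' a : has_deriv g g' -> Clim g (g a) a.
Proof.
  assert (Hcont : forall f, continuity_pt f a -> limit1_in f (fun x => x <> a) (f a) a).
  { intros f Hf eps Heps; destruct (Hf eps Heps) as [alp [Halp Hclose]].
    exists alp; split; [exact Halp |]; intros x [Hx Hdist]; apply Hclose; split;
    [split; [exact I | intro E; apply Hx; symmetry; exact E] | exact Hdist]. }
  intro H; destruct (H a) as [H1 H2]; split; apply Hcont, derivable_continuous_pt;
  eexists; eassumption.
Qed.

Lemma Clim_difference_quotient u u' a : has_deriv u u' -> u a = Czero ->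
  Clim (fun x => Cmul (u x) (RtoC (/ (x - a)))) (u' a) a.
Proof.
  assert (Hdq : forall f l, derivable_pt_lim f a l ->
            limit1_in (fun x => (f x - f a) / (x - a)) (fun x => x <> a) l a).
  { intros f l Hf eps Heps; destruct (Hf eps Heps) as [del Hdel].
    exists del; split; [apply cond_pos |]; intros x [Hx Hdist]; simpl in *; unfold R_dist in *.
    specialize (Hdel (x - a)); replace (a + (x - a)) with x in Hdel by ring.
    apply Hdel; [intro E; apply Hx; lra | exact Hdist]. }
  intros H Ha; destruct (H a) as [H1 H2]; split;
  (eapply limit1_in_ext; [| eapply Hdq; eassumption]);
  intros x Hx; simpl; rewrite Ha; simpl; unfold Rdiv; ring.
Qed.

Lemma Clim_power_factor u u' g g' a k : has_deriv u u' -> u a = Czero -> has_deriv g g' ->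
  Clim (fun x => Cmul (RtoC (/ (x - a) ^ k)) (Cmul (Cpow (u x) k) (g x)))
       (Cmul (Cpow (u' a) k) (g a)) a.
Proof.
  intros Hu Ha Hg.
  apply (Clim_ext (fun x => Cmul (Cpow (Cmul (u x) (RtoC (/ (x - a)))) k) (g x))).
  - intros x Hx; rewrite Cpow_mul_RtoC, pow_inv; ring.
  - apply Clim_mul; [apply Clim_pow, Clim_difference_quotient | eapply Clim_of_has_deriv];
    eassumption.
Qed.

(** ** The functions [p_{n,k}] *)

Section Bernstein.
Variables (l0 om : Cplx) (a b : R) (n k : nat).
Hypotheses (Hom : om <> Czero) (Hexp : Cexp (Cmul om (RtoC (b - a))) <> Cone)
           (Hk : (k <= n)%nat).

Definition ua (x : R) : Cplx := Csub (Cexp (Cmul om (RtoC (x - a)))) Cone.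
Definition ua' (x : R) : Cplx := Cmul om (Cexp (Cmul om (RtoC (x - a)))).

Definition denom : Cplx := Csub Cone (Cexp (Cmul om (RtoC (a - b)))).
Definition qb (x : R) : Cplx := Cdiv (Csub Cone (Cexp (Cmul om (RtoC (x - b))))) denom.
Definition qb' (x : R) : Cplx := Cdiv (Copp (Cmul om (Cexp (Cmul om (RtoC (x - b)))))) denom.

Definition normc : Cplx := Cmul (RtoC (INR (fact k))) (Cpow om k).
Definition weight (x : R) : Cplx := Cdiv (Cexp (Cmul l0 (RtoC (x - a)))) normc.

Definition cofactor_a (x : R) : Cplx := Cmul (weight x) (Cpow (qb x) (n - k)).
Definition cofactor_b (x : R) : Cplx := Cmul (weight x) (Cpow (ua x) k).

Lemma pnk_factor_a : pnk l0 om a b n k = fun x => Cmul (Cpow (ua x) k) (cofactor_a x).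
Proof. extensionality x; unfold pnk, cofactor_a, weight, ua, qb, normc, denom, Cdiv; ring. Qed.

Lemma pnk_factor_b : pnk l0 om a b n k = fun x => Cmul (Cpow (qb x) (n - k)) (cofactor_b x).
Proof. extensionality x; unfold pnk, cofactor_b, weight, ua, qb, normc, denom, Cdiv; ring. Qed.

Lemma normc_neq0 : normc <> Czero.
Proof. apply Cmul_neq0; [apply RtoC_neq0, INR_fact_neq_0 | apply Cpow_neq0, Hom]. Qed.

(** [e^{om(a-b)} <> 1], since [e^{om(b-a)} e^{om(a-b)} = 1]. *)
Lemma denom_neq0 : denom <> Czero.
Proof.
  intro E; apply Hexp.
  assert (Hab : Cexp (Cmul om (RtoC (a - b))) = Cone).
  { replace Cone with (Csub Cone denom) by (rewrite E; ring); unfold denom; ring. }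
  replace (Cexp (Cmul om (RtoC (b - a))))
    with (Cmul (Cexp (Cmul om (RtoC (b - a)))) (Cexp (Cmul om (RtoC (a - b)))))
    by (rewrite Hab; ring).
  rewrite <- Cexp_add, <- (Cexp_shift_self om a); f_equal.
  rewrite !RtoC_sub; ring.
Qed.

Lemma weight_neq0 x : weight x <> Czero.
Proof. apply Cmul_neq0; [apply Cexp_neq0 | apply Cinv_neq0, normc_neq0]. Qed.

Lemma ua_at_a : ua a = Czero.
Proof. unfold ua; rewrite Cexp_shift_self; ring. Qed.

Lemma ua'_at_a : ua' a = om.
Proof. unfold ua'; rewrite Cexp_shift_self; ring. Qed.

Lemma ua_at_b : ua b <> Czero.
Proof.
  unfold ua; intro E; apply Hexp.
  replace (Cexp (Cmul om (RtoC (b - a))))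
    with (Cadd (Csub (Cexp (Cmul om (RtoC (b - a)))) Cone) Cone) by ring.
  rewrite E; ring.
Qed.

Lemma qb_at_a : qb a = Cone.
Proof. unfold qb; fold denom; field; exact denom_neq0. Qed.

Lemma qb_at_b : qb b = Czero.
Proof. unfold qb, Cdiv; rewrite Cexp_shift_self; ring. Qed.

Lemma qb'_at_b : qb' b <> Czero.
Proof.
  unfold qb', Cdiv; rewrite Cexp_shift_self.
  apply Cmul_neq0; [| apply Cinv_neq0, denom_neq0].
  replace (Copp (Cmul om Cone)) with (Cmul (Copp Cone) om) by ring.
  apply Cmul_neq0; [intro E; injection E; lra | exact Hom].
Qed.

Lemma has_deriv_ua : has_deriv ua ua'.
Proof.
  eapply has_deriv_ext;
    [| | exact (has_deriv_add _ _ _ _ (has_deriv_shifted_Cexp om a)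
                                      (has_deriv_const (Copp Cone)))];
  intro x; unfold ua, ua', Csub; [reflexivity | ring].
Qed.

Lemma has_deriv_qb : has_deriv qb qb'.
Proof.
  eapply has_deriv_ext;
    [| | exact (has_deriv_mul _ _ _ _
                  (has_deriv_add _ _ _ _ (has_deriv_const Cone)
                     (has_deriv_scal (Copp Cone) _ _ (has_deriv_shifted_Cexp om b)))
                  (has_deriv_const (Cinv denom)))];
  intro x; unfold qb, qb', Cdiv, Csub; ring.
Qed.

Lemma ua_exp_sum : exp_sum (arith_prog om Czero 1) ua.
Proof.
  apply exp_sum_sub;
  [apply exp_sum_exp, arith_prog_step | apply exp_sum_const, arith_prog_start].
Qed.

Lemma qb_exp_sum : exp_sum (arith_prog om Czero 1) qb.
Proof.
  apply exp_sum_scal_r, exp_sum_sub;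
  [apply exp_sum_const, arith_prog_start | apply exp_sum_exp, arith_prog_step].
Qed.

Lemma weight_exp_sum : exp_sum (arith_prog om l0 0) weight.
Proof. apply exp_sum_scal_r, exp_sum_exp, arith_prog_start. Qed.

(** [p_{n,k}] has frequencies [l0 + j om], [j <= k + (n - k) = n]: it lies in
    [E_(l0, ..., l0 + n om)]. *)
Lemma pnk_in_E : in_E (lams l0 om n) (pnk l0 om a b n k).
Proof.
  apply in_E_of_exp_sum; eapply exp_sum_weaken; [intro mu; apply arith_prog_lams |].
  rewrite pnk_factor_a.
  refine (exp_sum_mul (arith_prog om Czero k) (arith_prog om l0 (n - k)) _ _ _ _
            (exp_sum_pow_prog _ _ _ ua_exp_sum) _);
    [intros mu nu; apply arith_prog_add; [ring | lia] |].
  refine (exp_sum_mul _ _ _ _ _ _ weight_exp_sum (exp_sum_pow_prog _ _ _ qb_exp_sum));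
  intros mu nu; apply arith_prog_add; [ring | lia].
Qed.

Lemma ua'_exp_sum : any_exp_sum ua'.
Proof. apply exp_sum_scal, exp_sum_exp; exact I. Qed.

Lemma qb'_exp_sum : any_exp_sum qb'.
Proof.
  apply exp_sum_scal_r;
  apply (exp_sum_ext _ (fun x => Cmul (Copp om) (Cexp (Cmul om (RtoC (x - b))))));
  [intro x; ring | apply exp_sum_scal, exp_sum_exp; exact I].
Qed.

Lemma cofactor_a_exp_sum : any_exp_sum cofactor_a.
Proof.
  apply any_exp_sum_mul;
  [exact (exp_sum_any _ _ weight_exp_sum)
  | exact (any_exp_sum_pow _ _ (exp_sum_any _ _ qb_exp_sum))].
Qed.

Lemma cofactor_b_exp_sum : any_exp_sum cofactor_b.
Proof.
  apply any_exp_sum_mul;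
  [exact (exp_sum_any _ _ weight_exp_sum)
  | exact (any_exp_sum_pow _ _ (exp_sum_any _ _ ua_exp_sum))].
Qed.

(** The Bernstein normalisation: [k! ua'(a)^k cofactor_a(a) = k! om^k / (k! om^k) = 1]. *)
Lemma normalisation_at_a :
  Cmul (Cmul (RtoC (INR (fact k))) (Cpow (ua' a) k)) (cofactor_a a) = Cone.
Proof.
  unfold cofactor_a, weight; rewrite ua'_at_a, qb_at_a, Cpow_one, Cexp_shift_self.
  unfold normc; field; split; [apply Cpow_neq0, Hom | apply RtoC_neq0, INR_fact_neq_0].
Qed.

Lemma pnk_zero_at_a : zero_of_order k (pnk l0 om a b n k) a.
Proof.
  rewrite pnk_factor_a.
  apply (power_factor_zero_order ua ua' a (exp_sum_any _ _ ua_exp_sum) ua'_exp_sum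
           has_deriv_ua ua_at_a k cofactor_a cofactor_a_exp_sum).
  - rewrite ua'_at_a; exact Hom.
  - unfold cofactor_a; rewrite qb_at_a, Cpow_one.
    replace (Cmul (weight a) Cone) with (weight a) by ring; apply weight_neq0.
Qed.

Lemma pnk_zero_at_b : zero_of_order (n - k) (pnk l0 om a b n k) b.
Proof.
  rewrite pnk_factor_b.
  apply (power_factor_zero_order qb qb' b (exp_sum_any _ _ qb_exp_sum) qb'_exp_sum
           has_deriv_qb qb_at_b (n - k) cofactor_b cofactor_b_exp_sum).
  - exact qb'_at_b.
  - apply Cmul_neq0; [apply weight_neq0 | apply Cpow_neq0, ua_at_b].
Qed.

Lemma pnk_deriv_at_a : deriv_at k (pnk l0 om a b n k) a Cone.
Proof.
  rewrite pnk_factor_a, <- normalisation_at_a.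
  exact (proj2 (power_factor_derivatives ua ua' a (exp_sum_any _ _ ua_exp_sum) ua'_exp_sum
                  has_deriv_ua ua_at_a k cofactor_a cofactor_a_exp_sum)).
Qed.

Lemma pnk_limit_at_a :
  Clim (fun x => Cmul (RtoC (INR (fact k) / (x - a) ^ k)) (pnk l0 om a b n k x)) Cone a.
Proof.
  destruct (exp_sum_deriv _ _ cofactor_a_exp_sum) as [g' [_ Hg']].
  rewrite <- normalisation_at_a, pnk_factor_a.
  apply (Clim_ext (fun x => Cmul (RtoC (INR (fact k)))
          (Cmul (RtoC (/ (x - a) ^ k)) (Cmul (Cpow (ua x) k) (cofactor_a x))))).
  - intros x _; unfold Rdiv; rewrite RtoC_mul; ring.
  - replace (Cmul (Cmul (RtoC (INR (fact k))) (Cpow (ua' a) k)) (cofactor_a a))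
      with (Cmul (RtoC (INR (fact k))) (Cmul (Cpow (ua' a) k) (cofactor_a a))) by ring.
    apply Clim_mul;
      [apply Clim_const | exact (Clim_power_factor _ _ _ _ _ k has_deriv_ua ua_at_a Hg')].
Qed.

End Bernstein.

Theorem mainTheorem12 (l0 om : Cplx) (n : nat) (a b : R) :
  om <> Czero -> a <> b ->
  Cexp (Cmul om (RtoC (b - a))) <> Cone ->
  forall k : nat, (k <= n)%nat ->
    in_E (lams l0 om n) (pnk l0 om a b n k) /\
    zero_of_order k (pnk l0 om a b n k) a /\
    zero_of_order (n - k) (pnk l0 om a b n k) b /\
    limit1_in (fun x => INR (fact k) * (Re (pnk l0 om a b n k x) / (x - a) ^ k))
              (fun x => x <> a) 1 a /\
    limit1_in (fun x => INR (fact k) * (Im (pnk l0 om a b n k x) / (x - a) ^ k))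
              (fun x => x <> a) 0 a /\
    deriv_at k (pnk l0 om a b n k) a Cone.
Proof.
  intros Hom _ Hexp k Hk.
  destruct (pnk_limit_at_a l0 om a b n k Hom Hexp) as [HRe HIm].
  split; [exact (pnk_in_E l0 om a b n k Hk) |].
  split; [exact (pnk_zero_at_a l0 om a b n k Hom Hexp) |].
  split; [exact (pnk_zero_at_b l0 om a b n k Hom Hexp) |].
  split; [eapply limit1_in_ext; [| exact HRe]; intros x _; simpl; unfold Rdiv; ring |].
  split; [eapply limit1_in_ext; [| exact HIm]; intros x _; simpl; unfold Rdiv; ring |].
  exact (pnk_deriv_at_a l0 om a b n k Hom Hexp).
Qed.
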